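(* Let $G$ and $H$ be connected graphs, each with at least $2$ vertices, neither of which contains a pair of true twins. Then the strong product $G\boxtimes H$ is $1$-perfectly orientable if and only if one of $G$, $H$ is isomorphic to $P_3$ and the other is isomorphic to $R_n$ for some $n\ge 1$ or to $R_n\ast K_1$ for some $n\ge 0$.
   Context: All graphs are finite and simple. An orientation of a graph $G$ is $1$-perfect if the out-neighborhood of every vertex induces a clique in $G$; $G$ is $1$-perfectly orientable if it admits a $1$-perfect orientation. Two distinct vertices $u,v$ are true twins if $N[u]=N[v]$ (closed neighborhoods). The strong product $G\boxtimes H$ has vertex set $V(G)\times V(H)$, with distinct $(u,v),(u',v')$ adjacent iff $u'\in N_G[u]$ and $v'\in N_H[v]$. $P_3$ is the path on $3$ vertices. For an integer $n\ge 0$, the raft $R_n$ is the graph with vertex set $X\cup Y$, where $X=\{x_0,\dots,x_n\}$ and $Y=\{y_0,\dots,y_n\}$ are disjoint cliques, and, for $0\le i,j\le n$, $x_i$ is adjacent to $y_j$ iff $i+j\ge n+1$ (no other edges). $R_n\ast K_1$ is $R_n$ with an added vertex adjacent to all vertices of $R_n$. *)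

From mathcomp Require Import all_boot.
Set Implicit Arguments. Unset Strict Implicit. Unset Printing Implicit Defensive.

Definition simple_graph (T : finType) (e : rel T) : Prop :=
  symmetric e /\ irreflexive e.

Definition connected_graph (T : finType) (e : rel T) : Prop :=
  forall x y : T, connect e x y.

Definition cnbhd (T : finType) (e : rel T) (u : T) : pred T :=
  fun w => (w == u) || e u w.

Definition true_twins (T : finType) (e : rel T) (u v : T) : Prop :=
  u != v /\ cnbhd e u =1 cnbhd e v.

Definition twin_free (T : finType) (e : rel T) : Prop :=
  forall u v : T, ~ true_twins e u v.

Definition strong_prod (T1 T2 : finType) (e1 : rel T1) (e2 : rel T2)
  : rel (T1 * T2)%type :=
  fun x y => [&& x != y, cnbhd e1 x.1 y.1 & cnbhd e2 x.2 y.2].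

Definition orientation (T : finType) (e : rel T) (o : rel T) : Prop :=
  (forall u v, o u v -> e u v) /\
  (forall u v, e u v -> (o u v && ~~ o v u) || (o v u && ~~ o u v)).

Definition one_perfect (T : finType) (e : rel T) (o : rel T) : Prop :=
  orientation e o /\
  (forall v u w, o v u -> o v w -> u != w -> e u w).

Definition one_perfectly_orientable (T : finType) (e : rel T) : Prop :=
  exists o : rel T, one_perfect e o.

Definition graph_iso (T T' : finType) (e : rel T) (e' : rel T') : Prop :=
  exists f : T -> T', bijective f /\ forall x y, e' (f x) (f y) = e x y.

Definition P3_rel : rel 'I_3 :=
  fun i j => (i.+1 == j :> nat) || (j.+1 == i :> nat).

(* raft R_n: vertex (false, i) is x_i, vertex (true, j) is y_j *)
Definition raft_rel (n : nat) : rel (bool * 'I_n.+1)%type :=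
  fun a b =>
    (a != b) &&
    (if a.1 == b.1 then true else (n.+1 <= a.2 + b.2)).

(* R_n * K_1: None is the added universal vertex *)
Definition raft_K1_rel (n : nat) : rel (option (bool * 'I_n.+1)) :=
  fun a b =>
    match a, b with
    | None, None => false
    | None, Some _ => true
    | Some _, None => true
    | Some a', Some b' => @raft_rel n a' b'
    end.

Definition raft_like (T : finType) (e : rel T) : Prop :=
  (exists n, 1 <= n /\ graph_iso (@raft_rel n) e) \/
  (exists n, graph_iso (@raft_K1_rel n) e).

(* Induced subgraphs of 1-perfectly orientable graphs are 1-perfectly
   orientable, and a connected twin-free graph on at least two vertices
   contains an induced P3; so if G ⊠ H is 1-perfectly orientable, so are
   P3 ⊠ G and P3 ⊠ H.  Following forced arcs shows that P3 ⊠ F is not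
   1-perfectly orientable when F is a claw, C4, C5, P5 or bull.  Without
   these, a vertex u with smallest closed neighbourhood is simplicial, N[u]
   and its complement are cliques with nested neighbourhoods across, and
   twin-freeness makes the graph a raft R_n, or R_n * K_1 if it has a
   universal vertex.  As P4 ⊠ P4 is not 1-perfectly orientable while every
   such graph except R_0 * K_1 = P3 contains an induced P4, one factor is P3.
   Conversely P3 ⊠ (R_n * K_1) is an intersection graph of boxes in the plane,
   oriented towards the box containing the other one's chosen corner. *)

From mathcomp Require Import all_boot zify.
Set Implicit Arguments. Unset Strict Implicit. Unset Printing Implicit Defensive.

Definition induced_emb (T T' : finType) (e : rel T) (e' : rel T') (f : T -> T') :=
  injective f /\ forall a b, e' (f a) (f b) = e a b.

Section InducedEmbedding.
Variables (T T' T'' : finType) (e : rel T) (e' : rel T') (e'' : rel T'').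

Lemma induced_emb_id : induced_emb e e id.
Proof. by split. Qed.

Lemma induced_emb_comp f g :
  induced_emb e e' f -> induced_emb e' e'' g -> induced_emb e e'' (g \o f).
Proof.
move=> [fi fe] [gi ge]; split; first exact: inj_comp.
by move=> a b /=; rewrite ge fe.
Qed.

Lemma cnbhd_induced_emb f :
  induced_emb e e' f -> forall a b, cnbhd e' (f a) (f b) = cnbhd e a b.
Proof. by move=> [fi fe] a b; rewrite /cnbhd fe (inj_eq fi). Qed.

Lemma iso_induced_emb : graph_iso e e' -> exists f : T' -> T, induced_emb e' e f.
Proof.
move=> [g [[h gh hg] ge]]; exists h; split; first exact: can_inj hg.
by move=> a b; rewrite -ge !hg.
Qed.

Lemma opo_induced_emb f :
  induced_emb e e' f -> one_perfectly_orientable e' -> one_perfectly_orientable e.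
Proof.
move=> [fi fe] [o [[o_e o_or] o_cl]].
exists (fun a b => o (f a) (f b)); split; first split.
- by move=> u v /o_e; rewrite fe.
- by move=> u v; rewrite -fe => /o_or.
- by move=> v u w ovu ovw uw; rewrite -fe (o_cl _ _ _ ovu ovw) ?(inj_eq fi).
Qed.

End InducedEmbedding.

Lemma induced_emb_sprod (T1 T2 T1' T2' : finType) (e1 : rel T1) (e2 : rel T2)
    (e1' : rel T1') (e2' : rel T2') f1 f2 :
  induced_emb e1 e1' f1 -> induced_emb e2 e2' f2 ->
  induced_emb (strong_prod e1 e2) (strong_prod e1' e2') (fun x => (f1 x.1, f2 x.2)).
Proof.
move=> h1 h2; split.
- by move=> [a b] [c d] [] /(proj1 h1) -> /(proj1 h2) ->.
- move=> [a b] [c d]; rewrite /strong_prod /= !(cnbhd_induced_emb h1).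
  by rewrite !(cnbhd_induced_emb h2) !xpair_eqE (inj_eq (proj1 h1)) (inj_eq (proj1 h2)).
Qed.

Lemma induced_emb_sprodC (T1 T2 : finType) (e1 : rel T1) (e2 : rel T2) :
  induced_emb (strong_prod e1 e2) (strong_prod e2 e1) (fun x => (x.2, x.1)).
Proof.
split; first by move=> [a b] [c d] [] -> ->.
move=> [a b] [c d]; rewrite /strong_prod /= !xpair_eqE.
by rewrite [(b == d) && _]andbC [cnbhd e2 b d && _]andbC.
Qed.

Lemma induced_emb_nth (T : finType) (e : rel T) k (F : rel 'I_k) (s : seq T) x0 :
  size s = k -> uniq s ->
  (forall i j : 'I_k, e (nth x0 s i) (nth x0 s j) = F i j) ->
  induced_emb F e (fun i => nth x0 s i).
Proof.
move=> hs hu hF; split => // i j /eqP; rewrite nth_uniq ?hs // => /eqP.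
exact: val_inj.
Qed.

Section OnePerfect.
Variables (T : finType) (e o : rel T).
Hypothesis Ho : one_perfect e o.

Lemma one_perfect_asym a b : o a b -> ~~ o b a.
Proof.
move=> oab; have := (proj2 (proj1 Ho)) a b ((proj1 (proj1 Ho)) _ _ oab).
by rewrite oab /=; case: (o b a).
Qed.

Lemma one_perfect_total a b : e a b -> o a b || o b a.
Proof. by move/((proj2 (proj1 Ho)) a b); case: (o a b); case: (o b a). Qed.

Lemma one_perfect_forced v u w : o v u -> e v w -> ~~ e u w -> u != w -> o w v.
Proof.
move=> ovu evw neuw uw; have := (proj2 (proj1 Ho)) v w evw.
case ovw: (o v w) => /=; last by rewrite andbT.
by move: neuw; rewrite ((proj2 Ho) v u w ovu ovw uw).
Qed.

End OnePerfect.

Definition edge_rel k (l : seq (nat * nat)) : rel 'I_k :=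
  fun i j => ((nat_of_ord i, nat_of_ord j) \in l) || ((nat_of_ord j, nat_of_ord i) \in l).

Definition claw_rel : rel 'I_4 := edge_rel [:: (0,1); (0,2); (0,3)].
Definition C4_rel : rel 'I_4 := edge_rel [:: (0,1); (1,2); (2,3); (3,0)].
Definition P4_rel : rel 'I_4 := edge_rel [:: (0,1); (1,2); (2,3)].
Definition P5_rel : rel 'I_5 := edge_rel [:: (0,1); (1,2); (2,3); (3,4)].
Definition bull_rel : rel 'I_5 := edge_rel [:: (0,1); (1,2); (2,0); (0,3); (1,4)].
Definition C5_rel : rel 'I_5 := edge_rel [:: (0,1); (1,2); (2,3); (3,4); (4,0)].

(* Unlike [inord], [ord_of] reduces by computation, which the [isT] arguments
   below rely on. *)
Definition ord_of k (i : nat) : 'I_k.+1 := Ordinal (ltn_pmod i (ltn0Sn k)).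
Definition vtx {k l} (p i : nat) : 'I_k.+1 * 'I_l.+1 := (ord_of k p, ord_of l i).

(* In each proof below, one orientation of a chosen edge forces, through
   [one_perfect_forced], a chain of arcs ending in the reversed edge. *)

Lemma P3_claw_not_opo : ~ one_perfectly_orientable (strong_prod P3_rel claw_rel).
Proof.
move=> [o Ho]; have fo := one_perfect_forced Ho.
have asym := one_perfect_asym Ho; have tot := one_perfect_total Ho.
case/orP: (tot (vtx 0 0) (vtx 1 2) isT) => h0.
- have h1 := fo (vtx 0 0) (vtx 1 2) (vtx 1 1) h0 isT isT isT.
  have h2 := fo (vtx 1 1) (vtx 0 0) (vtx 2 0) h1 isT isT isT.
  have h3 := fo (vtx 2 0) (vtx 1 1) (vtx 1 3) h2 isT isT isT.
  have h4 := fo (vtx 1 3) (vtx 2 0) (vtx 0 0) h3 isT isT isT.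
  have h5 := fo (vtx 0 0) (vtx 1 3) (vtx 1 2) h4 isT isT isT.
  by move: (asym _ _ h0); rewrite h5.
- have h1 := fo (vtx 1 2) (vtx 0 0) (vtx 2 0) h0 isT isT isT.
  have h2 := fo (vtx 2 0) (vtx 1 2) (vtx 1 1) h1 isT isT isT.
  have h3 := fo (vtx 1 1) (vtx 2 0) (vtx 0 0) h2 isT isT isT.
  have h4 := fo (vtx 0 0) (vtx 1 1) (vtx 1 3) h3 isT isT isT.
  have h5 := fo (vtx 1 3) (vtx 0 0) (vtx 2 0) h4 isT isT isT.
  have h6 := fo (vtx 2 0) (vtx 1 3) (vtx 1 2) h5 isT isT isT.
  have h7 := fo (vtx 1 2) (vtx 2 0) (vtx 0 0) h6 isT isT isT.
  by move: (asym _ _ h0); rewrite h7.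
Qed.

Lemma P3_C4_not_opo : ~ one_perfectly_orientable (strong_prod P3_rel C4_rel).
Proof.
move=> [o Ho]; have fo := one_perfect_forced Ho.
have asym := one_perfect_asym Ho; have tot := one_perfect_total Ho.
case/orP: (tot (vtx 1 0) (vtx 1 1) isT) => h0.
- have h1 := fo (vtx 1 0) (vtx 1 1) (vtx 0 3) h0 isT isT isT.
  have h2 := fo (vtx 0 3) (vtx 1 0) (vtx 1 2) h1 isT isT isT.
  have h3 := fo (vtx 1 2) (vtx 0 3) (vtx 2 3) h2 isT isT isT.
  have h4 := fo (vtx 2 3) (vtx 1 2) (vtx 1 0) h3 isT isT isT.
  have h5 := fo (vtx 1 0) (vtx 2 3) (vtx 1 1) h4 isT isT isT.
  by move: (asym _ _ h0); rewrite h5.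
- have h1 := fo (vtx 1 1) (vtx 1 0) (vtx 0 2) h0 isT isT isT.
  have h2 := fo (vtx 0 2) (vtx 1 1) (vtx 1 3) h1 isT isT isT.
  have h3 := fo (vtx 1 3) (vtx 0 2) (vtx 2 2) h2 isT isT isT.
  have h4 := fo (vtx 2 2) (vtx 1 3) (vtx 1 1) h3 isT isT isT.
  have h5 := fo (vtx 1 1) (vtx 2 2) (vtx 1 0) h4 isT isT isT.
  by move: (asym _ _ h0); rewrite h5.
Qed.

Lemma P3_P5_not_opo : ~ one_perfectly_orientable (strong_prod P3_rel P5_rel).
Proof.
move=> [o Ho]; have fo := one_perfect_forced Ho.
have asym := one_perfect_asym Ho; have tot := one_perfect_total Ho.
case/orP: (tot (vtx 0 1) (vtx 1 2) isT) => h0.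
- have h1 := fo (vtx 0 1) (vtx 1 2) (vtx 1 0) h0 isT isT isT.
  have h2 := fo (vtx 1 0) (vtx 0 1) (vtx 2 1) h1 isT isT isT.
  have h3 := fo (vtx 2 1) (vtx 1 0) (vtx 1 2) h2 isT isT isT.
  have h4 := fo (vtx 1 2) (vtx 2 1) (vtx 0 3) h3 isT isT isT.
  have h5 := fo (vtx 0 3) (vtx 1 2) (vtx 1 4) h4 isT isT isT.
  have h6 := fo (vtx 1 4) (vtx 0 3) (vtx 2 3) h5 isT isT isT.
  have h7 := fo (vtx 2 3) (vtx 1 4) (vtx 1 2) h6 isT isT isT.
  have h8 := fo (vtx 1 2) (vtx 2 3) (vtx 2 1) h7 isT isT isT.
  have h9 := fo (vtx 2 1) (vtx 1 2) (vtx 1 0) h8 isT isT isT.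
  have h10 := fo (vtx 1 0) (vtx 2 1) (vtx 0 1) h9 isT isT isT.
  have h11 := fo (vtx 0 1) (vtx 1 0) (vtx 1 2) h10 isT isT isT.
  by move: (asym _ _ h0); rewrite h11.
- have h1 := fo (vtx 1 2) (vtx 0 1) (vtx 0 3) h0 isT isT isT.
  have h2 := fo (vtx 0 3) (vtx 1 2) (vtx 1 4) h1 isT isT isT.
  have h3 := fo (vtx 1 4) (vtx 0 3) (vtx 2 3) h2 isT isT isT.
  have h4 := fo (vtx 2 3) (vtx 1 4) (vtx 1 2) h3 isT isT isT.
  have h5 := fo (vtx 1 2) (vtx 2 3) (vtx 0 1) h4 isT isT isT.
  by move: (asym _ _ h0); rewrite h5.
Qed.

Lemma P3_bull_not_opo : ~ one_perfectly_orientable (strong_prod P3_rel bull_rel).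
Proof.
move=> [o Ho]; have fo := one_perfect_forced Ho.
have asym := one_perfect_asym Ho; have tot := one_perfect_total Ho.
case/orP: (tot (vtx 0 0) (vtx 1 3) isT) => h0.
- have h1 := fo (vtx 0 0) (vtx 1 3) (vtx 0 1) h0 isT isT isT.
  have h2 := fo (vtx 0 1) (vtx 0 0) (vtx 1 4) h1 isT isT isT.
  have h3 := fo (vtx 1 4) (vtx 0 1) (vtx 2 1) h2 isT isT isT.
  have h4 := fo (vtx 2 1) (vtx 1 4) (vtx 1 2) h3 isT isT isT.
  have h5 := fo (vtx 1 2) (vtx 2 1) (vtx 0 0) h4 isT isT isT.
  have h6 := fo (vtx 0 0) (vtx 1 2) (vtx 1 3) h5 isT isT isT.
  by move: (asym _ _ h0); rewrite h6.
- have h1 := fo (vtx 1 3) (vtx 0 0) (vtx 2 0) h0 isT isT isT.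
  have h2 := fo (vtx 2 0) (vtx 1 3) (vtx 1 2) h1 isT isT isT.
  have h3 := fo (vtx 1 2) (vtx 2 0) (vtx 0 1) h2 isT isT isT.
  have h4 := fo (vtx 0 1) (vtx 1 2) (vtx 1 4) h3 isT isT isT.
  have h5 := fo (vtx 1 4) (vtx 0 1) (vtx 2 1) h4 isT isT isT.
  have h6 := fo (vtx 2 1) (vtx 1 4) (vtx 2 0) h5 isT isT isT.
  have h7 := fo (vtx 2 0) (vtx 2 1) (vtx 1 3) h6 isT isT isT.
  have h8 := fo (vtx 1 3) (vtx 2 0) (vtx 0 0) h7 isT isT isT.
  by move: (asym _ _ h0); rewrite h8.
Qed.

Lemma P3_C5_not_opo : ~ one_perfectly_orientable (strong_prod P3_rel C5_rel).
Proof.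
move=> [o Ho]; have fo := one_perfect_forced Ho.
have asym := one_perfect_asym Ho; have tot := one_perfect_total Ho.
case/orP: (tot (vtx 1 0) (vtx 1 1) isT) => h0.
- have h1 := fo (vtx 1 0) (vtx 1 1) (vtx 2 4) h0 isT isT isT.
  have h2 := fo (vtx 2 4) (vtx 1 0) (vtx 1 3) h1 isT isT isT.
  have h3 := fo (vtx 1 3) (vtx 2 4) (vtx 0 4) h2 isT isT isT.
  have h4 := fo (vtx 0 4) (vtx 1 3) (vtx 1 0) h3 isT isT isT.
  have h5 := fo (vtx 1 0) (vtx 0 4) (vtx 1 1) h4 isT isT isT.
  by move: (asym _ _ h0); rewrite h5.
- have h1 := fo (vtx 1 1) (vtx 1 0) (vtx 0 2) h0 isT isT isT.
  have h2 := fo (vtx 0 2) (vtx 1 1) (vtx 1 3) h1 isT isT isT.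
  have h3 := fo (vtx 1 3) (vtx 0 2) (vtx 2 2) h2 isT isT isT.
  have h4 := fo (vtx 2 2) (vtx 1 3) (vtx 1 1) h3 isT isT isT.
  have h5 := fo (vtx 1 1) (vtx 2 2) (vtx 1 0) h4 isT isT isT.
  by move: (asym _ _ h0); rewrite h5.
Qed.

Lemma P4_P4_not_opo : ~ one_perfectly_orientable (strong_prod P4_rel P4_rel).
Proof.
move=> [o Ho]; have fo := one_perfect_forced Ho.
have asym := one_perfect_asym Ho; have tot := one_perfect_total Ho.
case/orP: (tot (vtx 0 1) (vtx 1 2) isT) => h0.
- have h1 := fo (vtx 0 1) (vtx 1 2) (vtx 1 0) h0 isT isT isT.
  have h2 := fo (vtx 1 0) (vtx 0 1) (vtx 2 1) h1 isT isT isT.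
  have h3 := fo (vtx 2 1) (vtx 1 0) (vtx 1 2) h2 isT isT isT.
  have h4 := fo (vtx 1 2) (vtx 2 1) (vtx 2 3) h3 isT isT isT.
  have h5 := fo (vtx 2 3) (vtx 1 2) (vtx 3 2) h4 isT isT isT.
  have h6 := fo (vtx 3 2) (vtx 2 3) (vtx 2 1) h5 isT isT isT.
  have h7 := fo (vtx 2 1) (vtx 3 2) (vtx 1 0) h6 isT isT isT.
  have h8 := fo (vtx 1 0) (vtx 2 1) (vtx 0 1) h7 isT isT isT.
  have h9 := fo (vtx 0 1) (vtx 1 0) (vtx 1 2) h8 isT isT isT.
  by move: (asym _ _ h0); rewrite h9.
- have h1 := fo (vtx 1 2) (vtx 0 1) (vtx 2 1) h0 isT isT isT.
  have h2 := fo (vtx 2 1) (vtx 1 2) (vtx 3 2) h1 isT isT isT.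
  have h3 := fo (vtx 3 2) (vtx 2 1) (vtx 2 3) h2 isT isT isT.
  have h4 := fo (vtx 2 3) (vtx 3 2) (vtx 1 2) h3 isT isT isT.
  have h5 := fo (vtx 1 2) (vtx 2 3) (vtx 0 1) h4 isT isT isT.
  by move: (asym _ _ h0); rewrite h5.
Qed.

Ltac compute_rhs :=
  match goal with |- _ = ?r => let v := eval vm_compute in r in change r with v end.

Ltac solve_entry :=
  match goal with
  | |- is_true _ => assumption
  | |- _ = true => assumption
  | |- _ = false => apply/negbTE; assumption
  end.

Ltac add_symmetric_hyps e e_sym :=
  repeat match goal with
  | h : is_true (e ?a ?b) |- _ =>
     lazymatch goal with
     | _ : is_true (e b a) |- _ => fail
     | _ => have := h; rewrite e_sym => ?
     end
  | h : is_true (~~ e ?a ?b) |- _ =>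
     lazymatch goal with
     | _ : is_true (~~ e b a) |- _ => fail
     | _ => have := h; rewrite e_sym => ?
     end
  | h : is_true (?a != ?b) |- _ =>
     lazymatch goal with
     | _ : is_true (b != a) |- _ => fail
     | _ => have := h; rewrite eq_sym => ?
     end
  end.

Section ForbiddenInducedSubgraphs.
Variables (T : finType) (e : rel T).
Hypothesis e_simple : simple_graph e.
Hypothesis P3e_opo : one_perfectly_orientable (strong_prod P3_rel e).

Lemma edge_neq a b : e a b -> a != b.
Proof. by apply: contraTneq => ->; rewrite (proj2 e_simple). Qed.

Lemma edge_loopF a : e a a = false.
Proof. exact: (proj2 e_simple). Qed.

Lemma no_induced k (F : rel 'I_k) (s : seq T) x0 :
  ~ one_perfectly_orientable (strong_prod P3_rel F) -> size s = k -> uniq s ->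
  (forall i j : 'I_k, e (nth x0 s i) (nth x0 s j) = F i j) -> False.
Proof.
move=> F_not_opo hs hu hF; apply: F_not_opo; apply: (opo_induced_emb _ P3e_opo).
exact: (induced_emb_sprod (induced_emb_id P3_rel) (induced_emb_nth hs hu hF)).
Qed.

Ltac add_neq_hyps :=
  repeat match goal with
  | h : is_true (e ?a ?b) |- _ =>
     lazymatch goal with
     | _ : is_true (a != b) |- _ => fail
     | _ => have := edge_neq h => ?
     end
  end.

Ltac check_induced :=
  match goal with
  | |- context [uniq _] => rewrite /= !inE !negb_or; by repeat (apply/andP; split)
  | _ => let i := fresh in let j := fresh in
         move=> [[|[|[|[|[|i]]]]] ?] [[|[|[|[|[|j]]]]] ?] //=;
         rewrite /= ?edge_loopF //; compute_rhs; solve_entry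
  end.

Ltac no_induced_pattern F F_not_opo s x0 :=
  move=> *; add_neq_hyps; add_symmetric_hyps e (proj1 e_simple);
  apply: (@no_induced _ F s x0 F_not_opo) => //; check_induced.

Lemma no_induced_claw a b c d :
  e a b -> e a c -> e a d -> ~~ e b c -> ~~ e b d -> ~~ e c d ->
  b != c -> b != d -> c != d -> False.
Proof. no_induced_pattern claw_rel P3_claw_not_opo [:: a; b; c; d] a. Qed.

Lemma no_induced_C4 a b c d :
  e a b -> e b c -> e c d -> e d a -> ~~ e a c -> ~~ e b d ->
  a != c -> b != d -> False.
Proof. no_induced_pattern C4_rel P3_C4_not_opo [:: a; b; c; d] a. Qed.

Lemma no_induced_P5 a b c d f : e a b -> e b c -> e c d -> e d f ->
  ~~ e a c -> ~~ e a d -> ~~ e a f -> ~~ e b d -> ~~ e b f -> ~~ e c f ->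
  a != c -> a != d -> a != f -> b != d -> b != f -> c != f -> False.
Proof. no_induced_pattern P5_rel P3_P5_not_opo [:: a; b; c; d; f] a. Qed.

Lemma no_induced_bull a b c d f : e a b -> e b c -> e c a -> e a d -> e b f ->
  ~~ e a f -> ~~ e b d -> ~~ e c d -> ~~ e c f -> ~~ e d f ->
  a != f -> b != d -> c != d -> c != f -> d != f -> False.
Proof. no_induced_pattern bull_rel P3_bull_not_opo [:: a; b; c; d; f] a. Qed.

Lemma no_induced_C5 a b c d f : e a b -> e b c -> e c d -> e d f -> e f a ->
  ~~ e a c -> ~~ e a d -> ~~ e b d -> ~~ e b f -> ~~ e c f ->
  a != c -> a != d -> b != d -> b != f -> c != f -> False.
Proof. no_induced_pattern C5_rel P3_C5_not_opo [:: a; b; c; d; f] a. Qed.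

End ForbiddenInducedSubgraphs.

Lemma card_le_inj_nat (T : finType) (A : {pred T}) (f : T -> nat) m :
  {in A &, injective f} -> {in A, forall a, f a < m} -> #|A| <= m.
Proof.
case: m => [|m] f_inj f_lt.
  rewrite leqn0; apply/eqP/eq_card0 => a; apply/negbTE/negP => /f_lt.
  by rewrite ltn0.
pose g a : 'I_m.+1 := inord (f a).
have g_inj : {in A &, injective g}.
  move=> a b aA bA /(congr1 (@nat_of_ord _)).
  by rewrite /g !inordK ?f_lt //; apply: f_inj.
by rewrite -(card_in_imset g_inj); apply: leq_trans (max_card _) _; rewrite card_ord.
Qed.

Section RaftRecognition.
Variables (T : finType) (e : rel T) (X : {set T}) (n : nat).
Hypotheses (e_sym : symmetric e) (e_irr : irreflexive e) (e_twf : twin_free e).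
Hypothesis X_clique : forall a b, a \in X -> b \in X -> a != b -> e a b.
Hypothesis notX_clique : forall a b, a \notin X -> b \notin X -> a != b -> e a b.
Hypothesis no_cross : forall x x' y y', x \in X -> x' \in X -> y \notin X -> y' \notin X ->
  e x y -> ~~ e x' y -> e x' y' -> ~~ e x y' -> False.
Hypothesis no_universal : forall v, exists w, (w != v) && ~~ e v w.
Hypothesis card_X : #|X| = n.+1.

(* The raft structure: vertices are ranked by the number of their neighbours
   on the other side; ranks on one side are 0, ..., n and [x, y] is an edge
   across iff their ranks add up to at least [n + 1]. *)
Definition cross_nbhd v := [set w | e v w & (w \in X) != (v \in X)].
Definition rank v := #|cross_nbhd v|.

Lemma same_side_adj a b : a != b -> (a \in X) = (b \in X) -> e a b.
Proof.
move=> ab; case aX: (a \in X) => bX; first exact: X_clique.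
by apply: notX_clique; rewrite -?bX ?aX.
Qed.

Lemma cross_nbhd_nested v v' : (v \in X) = (v' \in X) ->
  (cross_nbhd v \subset cross_nbhd v') || (cross_nbhd v' \subset cross_nbhd v).
Proof.
move=> vv'; case: (boolP (_ \subset _)) => //= /subsetPn [y yv ynv'].
apply/subsetP => y' y'v'; apply/negPn/negP => ny'v.
move: yv ynv' y'v' ny'v; rewrite !inE -vv' => /andP[evy yX] nv'y /andP[ev'y' y'X] nvy'.
rewrite yX andbT in nv'y; rewrite y'X andbT in nvy'.
case vX: (v \in X) in yX y'X vv'.
- have v'X : v' \in X by rewrite -vv'.
  have yX' : y \notin X by move: yX; case: (y \in X).
  have y'X' : y' \notin X by move: y'X; case: (y' \in X).
  exact: (no_cross vX v'X yX' y'X' evy nv'y ev'y' nvy').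
- have v'X : v' \notin X by rewrite -vv'.
  have yX' : y \in X by move: yX; case: (y \in X).
  have y'X' : y' \in X by move: y'X; case: (y' \in X).
  by apply: (no_cross yX' y'X' (negbT vX) v'X); rewrite e_sym.
Qed.

Lemma rank_lt_sep a b y : (a \in X) = (b \in X) ->
  y \notin cross_nbhd a -> y \in cross_nbhd b -> rank a < rank b.
Proof.
move=> ab ya yb; case/orP: (cross_nbhd_nested ab) => sub.
  by apply: proper_card; apply/properP; split => //; exists y.
by move/subsetP: sub => /(_ y yb); rewrite (negbTE ya).
Qed.

Lemma rank_inj v v' : (v \in X) = (v' \in X) -> rank v = rank v' -> v = v'.
Proof.
move=> vv' rvv'; apply/eqP/negPn/negP => nvv'.
have Nvv' : cross_nbhd v = cross_nbhd v'.
  case/orP: (cross_nbhd_nested vv') => sub; apply/eqP.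
    by rewrite eqEcard sub -/(rank v') -rvv' /=.
  by rewrite eq_sym eqEcard sub -/(rank v) rvv' /=.
apply: (e_twf (u:=v) (v:=v')); split=> // z; rewrite /cnbhd.
case: (eqVneq z v) => [->|zv]; first by rewrite /= (negbTE nvv') same_side_adj 1?eq_sym.
case: (eqVneq z v') => [->|zv'] /=; first by rewrite same_side_adj.
case: (eqVneq (z \in X) (v \in X)) => [zX|zX].
  have evz : e v z by apply: same_side_adj; rewrite 1?eq_sym // zX.
  have ev'z : e v' z by apply: same_side_adj; rewrite 1?eq_sym // zX vv'.
  by rewrite evz ev'z.
have zX' : (z \in X) != (v' \in X) by rewrite -vv'.
by move/setP/(_ z): Nvv'; rewrite !inE zX zX' !andbT.
Qed.

Definition other_side v := [set w | (w \in X) != (v \in X)].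

Lemma other_sideE v : other_side v = if v \in X then ~: X else X.
Proof.
by rewrite /other_side; case: (v \in X); apply/setP => w; rewrite !inE; case: (w \in X).
Qed.

Lemma rank_lt_side v : rank v < #|other_side v|.
Proof.
apply: proper_card; apply/properP; split.
  by apply/subsetP => w; rewrite !inE => /andP[].
have [w /andP [wv nvw]] := no_universal v; exists w.
  rewrite inE; apply: contra nvw => /eqP wX.
  by rewrite same_side_adj // eq_sym.
by rewrite inE negb_and nvw.
Qed.

Lemma card_notX : #|~: X| = n.+1.
Proof.
have le_X : #|X| <= #|~: X|.
  apply: (@card_le_inj_nat _ _ rank).
    by move=> a b aX bX; apply: rank_inj; rewrite aX bX.
  by move=> a aX; have := rank_lt_side a; rewrite other_sideE aX.
have le_notX : #|~: X| <= #|X|.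
  apply: (@card_le_inj_nat _ _ rank).
    by move=> a b; rewrite !inE => /negbTE aX /negbTE bX; apply: rank_inj; rewrite aX bX.
  by move=> a; rewrite inE => /negbTE aX; have := rank_lt_side a; rewrite other_sideE aX.
by apply/eqP; rewrite -card_X eqn_leq le_X le_notX.
Qed.

Lemma rank_lt v : rank v < n.+1.
Proof.
have := rank_lt_side v; rewrite other_sideE.
by case: (v \in X); rewrite ?card_notX ?card_X.
Qed.

Lemma cross_nbhdE v w : (w \in X) != (v \in X) -> (w \in cross_nbhd v) = e v w.
Proof. by move=> wv; rewrite inE wv andbT. Qed.

Lemma in_cross_nbhd_notX y a : y \notin X -> (a \in cross_nbhd y) = e y a && (a \in X).
Proof. by move=> yX; rewrite inE (negbTE yX); case: (a \in X). Qed.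

(* The vertices of [X] outside the neighbourhood of [y] have pairwise distinct
   ranks below [rank x]. *)
Lemma rank_sum_adj x y : x \in X -> y \notin X -> e x y -> n.+1 <= rank x + rank y.
Proof.
move=> xX yX exy.
have nbr_X : X :&: cross_nbhd y = cross_nbhd y.
  by apply/setIidPr/subsetP => a; rewrite in_cross_nbhd_notX // => /andP[].
have := cardsID (cross_nbhd y) X; rewrite nbr_X card_X -/(rank y) => <-.
rewrite addnC leq_add2r; apply: (@card_le_inj_nat _ _ rank).
  move=> a b; rewrite !inE => /andP[_ aX] /andP[_ bX].
  by apply: rank_inj; rewrite aX bX.
move=> a; rewrite inE => /andP [ya aX]; apply: (rank_lt_sep (y := y)).
- by rewrite aX xX.
- move: ya; rewrite in_cross_nbhd_notX // aX andbT => nya.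
  by rewrite cross_nbhdE ?aX ?(negbTE yX) // e_sym.
- by rewrite cross_nbhdE ?xX ?(negbTE yX).
Qed.

(* Dually, the neighbours of [y] in [X] have pairwise distinct ranks above
   [rank x]. *)
Lemma rank_sum_nadj x y : x \in X -> y \notin X -> ~~ e x y -> rank x + rank y <= n.
Proof.
move=> xX yX nexy.
have rank_gt a : a \in cross_nbhd y -> rank x < rank a.
  rewrite in_cross_nbhd_notX // => /andP [eya aX].
  apply: (rank_lt_sep (y := y)); first by rewrite aX xX.
    by rewrite cross_nbhdE ?xX ?(negbTE yX).
  by rewrite cross_nbhdE ?aX ?(negbTE yX) // e_sym.
suff : rank y <= n - rank x by have := rank_lt x; lia.
apply: (@card_le_inj_nat _ _ (fun a => rank a - (rank x).+1)).
  move=> a b ay by_ /= ab; apply: rank_inj.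
    by move: ay by_; rewrite !in_cross_nbhd_notX // => /andP[_ ->] /andP[_ ->].
  by have := rank_gt _ ay; have := rank_gt _ by_; lia.
by move=> a ay /=; have := rank_gt _ ay; have := rank_lt a; lia.
Qed.

Lemma adj_rank x y : x \in X -> y \notin X -> e x y = (n.+1 <= rank x + rank y).
Proof.
move=> xX yX; case exy: (e x y); first by rewrite rank_sum_adj.
by apply/esym/negbTE; rewrite -ltnNge ltnS rank_sum_nadj ?exy.
Qed.

Definition raft_coord v : bool * 'I_n.+1 := (v \notin X, inord (rank v)).

Lemma raft_coord_inj : injective raft_coord.
Proof.
move=> a b [sX] /(congr1 (@nat_of_ord _)); rewrite !inordK ?rank_lt //.
by apply: rank_inj; move: sX; case: (a \in X); case: (b \in X).
Qed.

Lemma raft_rel_coord a b : @raft_rel n (raft_coord a) (raft_coord b) = e a b.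
Proof.
rewrite /raft_rel; case: (eqVneq a b) => [<-|ab]; first by rewrite eqxx e_irr.
rewrite (inj_eq raft_coord_inj) ab /= !inordK ?rank_lt //.
case aX: (a \in X); case bX: (b \in X) => /=.
- by rewrite same_side_adj // aX bX.
- by rewrite adj_rank ?bX.
- by rewrite e_sym adj_rank ?aX // addnC.
- by rewrite same_side_adj // aX bX.
Qed.

Lemma raft_iso_of_split : graph_iso (@raft_rel n) e.
Proof.
have [g coordK gK] : bijective raft_coord.
  apply: (inj_card_bij raft_coord_inj).
  by rewrite card_prod card_bool card_ord -(cardsC X) card_X card_notX addnn -mul2n.
by exists g; split; [exists raft_coord | move=> a b; rewrite -raft_rel_coord !gK].
Qed.

End RaftRecognition.

Section Apex.
Variables (T : finType) (e : rel T) (w : T).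
Hypotheses (e_sym : symmetric e) (e_irr : irreflexive e) (e_twf : twin_free e).
Hypothesis w_universal : forall t, t != w -> e w t.

Definition del_apex_rel : rel {x : T | x != w} := fun a b => e (val a) (val b).

Lemma twin_free_del_apex : twin_free del_apex_rel.
Proof.
move=> a b [ab twins]; apply: (e_twf (u:=val a) (v:=val b)); split.
  by rewrite (inj_eq val_inj).
move=> z; case: (eqVneq z w) => [->|zw].
  by rewrite /cnbhd ![e _ w]e_sym !w_universal ?(valP a) ?(valP b) ?orbT.
by have := twins (Sub z zw); rewrite /cnbhd /del_apex_rel -!(inj_eq val_inj) /=.
Qed.

Lemma no_universal_del_apex v : exists v', (v' != v) && ~~ del_apex_rel v v'.
Proof.
have [/existsP [t /andP [tv nvt]] | /existsPn v_univ] :=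
  boolP [exists t, (t != val v) && ~~ e (val v) t].
  have tw : t != w by apply: contraNneq nvt => ->; rewrite e_sym w_universal ?(valP v).
  by exists (Sub t tw); rewrite -(inj_eq val_inj) /del_apex_rel SubK tv.
exfalso; apply: (e_twf (u:=val v) (v:=w)); split; first exact: (valP v).
move=> z; rewrite /cnbhd; case: (eqVneq z w) => [->|zw] /=.
  by rewrite e_sym w_universal ?(valP v) ?orbT.
case: (eqVneq z (val v)) => [->|zv] /=; first by rewrite w_universal ?(valP v).
by move: (v_univ z); rewrite zv w_universal //= negbK.
Qed.

Lemma raft_K1_iso_of_del_apex n :
  graph_iso (@raft_rel n) del_apex_rel -> graph_iso (@raft_K1_rel n) e.
Proof.
move=> [h [[h' hK h'K] h_rel]].
exists (fun o => if o is Some a then val (h a) else w); split.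
  exists (fun v => if insub v is Some v' then Some (h' v') else None).
    by move=> [a|] /=; [rewrite valK hK | rewrite insubN // eqxx].
  by move=> v; case: insubP => [v' _ <- /=|]; [rewrite h'K | rewrite negbK => /eqP ->].
move=> [a|] [b|] /=; first exact: h_rel.
- by rewrite e_sym w_universal ?(valP (h a)).
- by rewrite w_universal ?(valP (h b)).
- exact: e_irr.
Qed.

End Apex.

Lemma raft_like_of_split (T : finType) (e : rel T) (X : {set T}) :
  symmetric e -> irreflexive e -> twin_free e ->
  (forall a b, a \in X -> b \in X -> a != b -> e a b) ->
  (forall a b, a \notin X -> b \notin X -> a != b -> e a b) ->
  (forall x x' y y', x \in X -> x' \in X -> y \notin X -> y' \notin X ->
     e x y -> ~~ e x' y -> e x' y' -> ~~ e x y' -> False) ->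
  1 < #|X| -> raft_like e.
Proof.
move=> e_sym e_irr e_twf X_clique notX_clique no_cross card_X.
have [/existsP [w /forallP w_univ] | /existsPn no_univ] :=
  boolP [exists w, [forall t, (t != w) ==> e w t]]; last first.
  left; exists #|X|.-1; split; first by move: card_X; case: #|X| => [|[]].
  apply: (raft_iso_of_split e_sym e_irr e_twf X_clique notX_clique no_cross).
    by move=> v; have /forallPn [w] := no_univ v; rewrite negb_imply; exists w.
  by move: card_X; case: #|X|.
have {}w_univ t : t != w -> e w t := implyP (w_univ t).
right; exists #|[set v : {x | x != w} | val v \in X]|.-1.
apply: (raft_K1_iso_of_del_apex e_sym e_irr w_univ).
apply: (raft_iso_of_split (X := [set v | val v \in X]) _ _
  (twin_free_del_apex e_sym e_twf w_univ) _ _ _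
  (no_universal_del_apex e_sym e_twf w_univ)).
- by move=> a b; apply: e_sym.
- by move=> a; apply: e_irr.
- by move=> a b; rewrite !inE -(inj_eq val_inj); apply: X_clique.
- by move=> a b; rewrite !inE -(inj_eq val_inj); apply: notX_clique.
- by move=> x x' y y'; rewrite !inE; apply: no_cross.
have [v vX vw] : exists2 v, v \in X & v != w.
  have [v [v' [vX v'X vv']]] : exists v v', [/\ v \in X, v' \in X & v != v'].
    by move/card_gt1P: card_X.
  by case: (eqVneq v w) => [vw|]; [exists v'; rewrite // -vw eq_sym | exists v].
suff : 0 < #|[set v : {x | x != w} | val v \in X]| by case: #|_|.
by apply/card_gt0P; exists (Sub v vw); rewrite inE SubK.
Qed.

Lemma exists_neq (T : finType) (u : T) : 1 < #|T| -> exists t, t != u.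
Proof.
move=> card_T; have : 0 < #|[set~ u]| by rewrite cardsC1; case: #|T| card_T => [|[]].
by case/card_gt0P => t; rewrite !inE => tu; exists t.
Qed.

Lemma exists_nbr (T : finType) (e : rel T) (u : T) :
  connected_graph e -> 1 < #|T| -> exists v, e u v.
Proof.
move=> e_conn card_T; have [t tu] := exists_neq u card_T.
case/connectP: (e_conn u t) => [[|a p]] /=; first by move=> _ tu'; rewrite tu' eqxx in tu.
by case/andP => eua _ _; exists a.
Qed.

Section RaftStructure.
Variables (T : finType) (e : rel T).
Hypotheses (e_simple : simple_graph e) (e_conn : connected_graph e) (e_twf : twin_free e).
Hypothesis card_T : 1 < #|T|.
Hypothesis P3e_opo : one_perfectly_orientable (strong_prod P3_rel e).

Let e_sym := proj1 e_simple.
Let no_claw := no_induced_claw e_simple P3e_opo.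
Let no_C4 := no_induced_C4 e_simple P3e_opo.
Let no_P5 := no_induced_P5 e_simple P3e_opo.
Let no_bull := no_induced_bull e_simple P3e_opo.
Let no_C5 := no_induced_C5 e_simple P3e_opo.

Lemma adj_sym a b : e a b -> e b a. Proof. by rewrite e_sym. Qed.
Lemma nadj_sym a b : ~~ e a b -> ~~ e b a. Proof. by rewrite e_sym. Qed.
Lemma neq_sym (a b : T) : a != b -> b != a. Proof. by rewrite eq_sym. Qed.
Lemma neq_adj_nadj x y z : e x y -> ~~ e x z -> y != z.
Proof. by move=> exy; apply: contraNneq => <-. Qed.
Lemma neq_adj_nadj_l x y z : e x y -> ~~ e z y -> x != z.
Proof. by move=> exy; apply: contraNneq => <-. Qed.

(* A vertex with a smallest closed neighbourhood: two non-adjacent neighbours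
   [p], [q] of it would each have a private neighbour [r], [s], producing an
   induced C4, C5 or P5. *)
Lemma simplicial_vertex_exists :
  exists u, forall p q, e u p -> e u q -> p != q -> e p q.
Proof.
have [x0 _] : exists x0 : T, x0 \in T by apply/card_gt0P; apply: ltn_trans card_T.
pose N v := [set w | cnbhd e v w].
have [u _ u_min] := @arg_minnP T x0 predT (fun v => #|N v|) isT.
exists u => p q eup euq pq; apply/negPn/negP => nepq.
have private a b : e u a -> e u b -> a != b -> ~~ e a b ->
    exists r, e a r && ~~ cnbhd e u r.
  move=> eua eub ab neab.
  have [Nau|/subsetPn [r ra ru]] := boolP (N a \subset N u).
    have Nau' : N a = N u by apply/eqP; rewrite eqEcard Nau u_min.
    have : b \in N a by rewrite Nau' inE /cnbhd eub orbT.
    by rewrite inE /cnbhd (negbTE neab) orbF eq_sym (negbTE ab).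
  exists r; move: ra ru; rewrite !inE /cnbhd => /orP [/eqP ->|ear] nru.
    by rewrite eua orbT in nru.
  by rewrite ear nru.
have [r /andP [epr nur]] := private p q eup euq pq nepq.
have [s /andP [eqs nus]] := private q p euq eup (neq_sym pq) (nadj_sym nepq).
move: nur nus; rewrite /cnbhd !negb_or => /andP [ru nur] /andP [su nus].
case eqr: (e q r).
  exact: (no_C4 eup epr (adj_sym eqr) (adj_sym euq) nur nepq (neq_sym ru) pq).
case eps: (e p s).
  exact: (no_C4 eup eps (adj_sym eqs) (adj_sym euq) nus nepq (neq_sym su) pq).
have rs : r != s by apply: contraFneq eqr => ->.
have ps : p != s := neq_sym (neq_adj_nadj eqs (nadj_sym nepq)).
have rq : r != q := neq_adj_nadj epr nepq.
case ers: (e r s).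
  exact: (no_C5 epr ers (adj_sym eqs) (adj_sym euq) eup (negbT eps) nepq
    (nadj_sym (negbT eqr)) (nadj_sym nur) (nadj_sym nus) ps pq rq ru su).
exact: (no_P5 (adj_sym epr) (adj_sym eup) euq eqs (nadj_sym nur) (nadj_sym (negbT eqr))
  (negbT ers) nepq (negbT eps) nus ru rq rs pq ps (neq_sym su)).
Qed.

Section FromSimplicial.
Variable u : T.
Hypothesis u_simplicial : forall p q, e u p -> e u q -> p != q -> e p q.

Definition far v := (v != u) && ~~ e u v.
Definition second_layer v := far v && [exists x, e u x && e x v].

Lemma far_cnbhd v : far v = ~~ cnbhd e u v.
Proof. by rewrite /far /cnbhd negb_or. Qed.

Lemma near_clique a b : cnbhd e u a -> cnbhd e u b -> a != b -> e a b.
Proof.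
rewrite /cnbhd => /orP [/eqP ->|eua] /orP [/eqP ->|eub] //; first by rewrite eqxx.
- by move=> _; rewrite adj_sym.
- exact: u_simplicial.
Qed.

Lemma far_adj_via_nbrs y y' x x' : far y -> far y' -> e u x -> e x y -> e u x' -> e x' y' ->
  y != y' -> e y y'.
Proof.
move=> /andP [yu nuy] /andP [y'u nuy'] eux exy eux' ex'y' yy'.
apply/negPn/negP => nyy'.
have nxy' : ~~ e x y'.
  apply/negP => exy'.
  exact: (no_claw (adj_sym eux) exy exy' nuy nuy' nyy' (neq_sym yu) (neq_sym y'u) yy').
have nx'y : ~~ e x' y.
  apply/negP => ex'y.
  exact: (no_claw (adj_sym eux') ex'y ex'y' nuy nuy' nyy' (neq_sym yu) (neq_sym y'u) yy').
have exx' : e x x' := u_simplicial eux eux' (neq_adj_nadj_l exy nx'y).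
exact: (no_bull exx' (adj_sym eux') eux exy ex'y' nxy' nx'y nuy nuy' nyy'
  (neq_adj_nadj eux nuy') (neq_adj_nadj eux' nuy) (neq_sym yu) (neq_sym y'u) yy').
Qed.

Lemma second_layer_nbr v : second_layer v -> exists x, e u x && e x v.
Proof. by case/andP => _ /existsP. Qed.

Lemma second_layer_common_nbr y y' : second_layer y -> second_layer y' -> y != y' ->
  exists x, [&& e u x, e x y & e x y'].
Proof.
move=> Yy Yy' yy'.
have [x /andP [eux exy]] := second_layer_nbr Yy.
have [x' /andP [eux' ex'y']] := second_layer_nbr Yy'.
have fy : far y by case/andP: Yy.
have fy' : far y' by case/andP: Yy'.
have eyy' := far_adj_via_nbrs fy fy' eux exy eux' ex'y' yy'.
case exy': (e x y'); first by exists x; rewrite eux exy exy'.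
case ex'y: (e x' y); first by exists x'; rewrite eux' ex'y ex'y'.
case/andP: fy => yu nuy; case/andP: fy' => y'u nuy'.
have xx' : x != x' := neq_adj_nadj_l exy (negbT ex'y).
exfalso; exact: (no_C4 exy eyy' (adj_sym ex'y') (u_simplicial eux' eux (neq_sym xx'))
  (negbT exy') (nadj_sym (negbT ex'y)) (neq_adj_nadj eux nuy')
  (neq_sym (neq_adj_nadj eux' nuy))).
Qed.

Lemma third_layer_nadj z : far z -> ~~ second_layer z -> forall x, e u x -> ~~ e x z.
Proof.
move=> fz nYz x eux; apply/negP => exz; move: nYz; rewrite /second_layer fz /=.
by move/existsPn => /(_ x); rewrite eux exz.
Qed.

Lemma second_third_adj y z y' : second_layer y -> far z -> e y z -> ~~ second_layer z ->
  second_layer y' -> y' != y -> y' != z -> e y' z.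
Proof.
move=> Yy fz eyz nYz Yy' y'y y'z; apply/negPn/negP => ny'z.
have [x /and3P [eux exy exy']] := second_layer_common_nbr Yy Yy' (neq_sym y'y).
have fy : far y by case/andP: Yy.
have fy' : far y' by case/andP: Yy'.
have eyy' := far_adj_via_nbrs fy fy' eux exy eux exy' (neq_sym y'y).
case/andP: fy => yu nuy; case/andP: fy' => y'u nuy'; case/andP: (fz) => zu nuz.
exact: (no_bull (adj_sym exy) exy' (adj_sym eyy') eyz (adj_sym eux) (nadj_sym nuy)
  (third_layer_nadj fz nYz eux) ny'z (nadj_sym nuy') (nadj_sym nuz)
  yu (neq_adj_nadj eux nuz) y'z y'u zu).
Qed.

Definition within3 v := [|| cnbhd e u v, second_layer v | [exists y, second_layer y && e y v]].

(* A vertex at distance 4 from [u] would end an induced P5 starting at [u]. *)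
Lemma within3_adj v w : within3 v -> e v w -> within3 w.
Proof.
have from_near a b : cnbhd e u a -> e a b -> within3 b.
  move=> ua eab; rewrite /within3; case ub: (cnbhd e u b) => //=.
  move: ua ub; rewrite /cnbhd => /orP [/eqP au|eua]; first by rewrite -au eab orbT.
  move/negbT; rewrite negb_or => /andP [bu nub].
  by rewrite /second_layer /far bu nub; apply/orP; left; apply/existsP; exists a; rewrite eua.
have from_second a b : second_layer a -> e a b -> within3 b.
  move=> Ya eab; rewrite /within3; case: (cnbhd e u b) => //=.
  by apply/orP; right; apply/existsP; exists a; rewrite Ya.
rewrite {1}/within3 => /or3P [uv|Yv|/existsP [y /andP [Yy eyv]]] evw.
- exact: from_near uv evw.
- exact: from_second Yv evw.
case uv: (cnbhd e u v); first exact: from_near uv evw.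
case Yv: (second_layer v); first exact: from_second Yv evw.
rewrite /within3; case uw: (cnbhd e u w) => //=; case Yw: (second_layer w) => //=.
apply/existsP; case eyw: (e y w); first by exists y; rewrite Yy eyw.
exfalso.
have fv : far v by rewrite far_cnbhd uv.
have fw : far w by rewrite far_cnbhd uw.
have [x /andP [eux exy]] := second_layer_nbr Yy.
have fy : far y by case/andP: Yy.
case/andP: (fy) => yu nuy; case/andP: (fv) => vu nuv; case/andP: (fw) => wu nuw.
have yw : y != w by apply: contraFneq Yw => <-.
exact: (no_P5 eux exy eyv evw nuy nuv nuw (third_layer_nadj fv (negbT Yv) eux)
  (third_layer_nadj fw (negbT Yw) eux) (negbT eyw) (neq_sym yu) (neq_sym vu) (neq_sym wu)
  (neq_adj_nadj eux nuv) (neq_adj_nadj eux nuw) yw).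
Qed.

Lemma within3_all v : within3 v.
Proof.
have : within3 u by rewrite /within3 /cnbhd eqxx.
case/connectP: (e_conn u v) => p + ->.
elim: p u => [|a p IH] x //= /andP [exa pth] x3.
exact: IH pth (within3_adj x3 exa).
Qed.

Lemma third_layer_nbr v : far v -> ~~ second_layer v -> exists z, second_layer z && e z v.
Proof.
rewrite far_cnbhd => uv nYv; apply/existsP.
by have := within3_all v; rewrite /within3 (negbTE uv) (negbTE nYv).
Qed.

Lemma far_clique y y' : far y -> far y' -> y != y' -> e y y'.
Proof.
have mixed a b : far a -> far b -> a != b -> second_layer a -> ~~ second_layer b -> e a b.
  move=> fa fb ab Ya nYb.
  have [z /andP [Yz ezb]] := third_layer_nbr fb nYb.
  have [<-//|za] := eqVneq z a.
  by apply: (second_third_adj Yz fb ezb nYb Ya) => //; rewrite eq_sym.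
move=> fy fy' yy'.
case Yy: (second_layer y); case Yy': (second_layer y').
- have [x /andP [eux exy]] := second_layer_nbr Yy.
  have [x' /andP [eux' ex'y']] := second_layer_nbr Yy'.
  exact: (far_adj_via_nbrs fy fy' eux exy eux' ex'y' yy').
- exact: mixed fy fy' yy' Yy (negbT Yy').
- by rewrite adj_sym // (mixed _ _ fy' fy (neq_sym yy') Yy' (negbT Yy)).
have [z /andP [Yz ezy]] := third_layer_nbr fy (negbT Yy).
have [z' /andP [Yz' ez'y']] := third_layer_nbr fy' (negbT Yy').
have ez'y : e z' y.
  have [->//|z'z] := eqVneq z' z.
  apply: (second_third_adj Yz fy ezy (negbT Yy) Yz') => //.
  by apply: contraFneq Yy => <-.
apply/negPn/negP => nyy'.
have [x' /andP [eux' ex'z']] := second_layer_nbr Yz'.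
case/andP: (fy) => yu nuy; case/andP: (fy') => y'u nuy'.
exact: (no_claw (adj_sym ex'z') ez'y ez'y' (third_layer_nadj fy (negbT Yy) eux')
  (third_layer_nadj fy' (negbT Yy') eux') nyy' (neq_adj_nadj eux' nuy)
  (neq_adj_nadj eux' nuy') yy').
Qed.

Lemma near_far_no_cross x x' y y' : cnbhd e u x -> cnbhd e u x' -> far y -> far y' ->
  e x y -> ~~ e x' y -> e x' y' -> ~~ e x y' -> False.
Proof.
move=> ux ux' fy fy' exy nx'y ex'y' nxy'.
have near_far_neq a b : cnbhd e u a -> far b -> a != b.
  by move=> ua; apply: contraTneq => <-; rewrite far_cnbhd ua.
exact: (no_C4 exy (far_clique fy fy' (neq_adj_nadj exy nxy')) (adj_sym ex'y')
  (near_clique ux' ux (neq_sym (neq_adj_nadj_l exy nx'y))) nxy' (nadj_sym nx'y)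
  (near_far_neq _ _ ux fy') (neq_sym (near_far_neq _ _ ux' fy))).
Qed.

End FromSimplicial.

Theorem raft_like_of_P3_sprod_opo : raft_like e.
Proof.
have [u u_simplicial] := simplicial_vertex_exists.
have [v euv] := exists_nbr u e_conn card_T.
apply: (@raft_like_of_split _ _ [set w | cnbhd e u w]) => //.
- exact: proj2 e_simple.
- by move=> a b; rewrite !inE; apply: near_clique.
- by move=> a b; rewrite !inE -!far_cnbhd; apply: far_clique.
- by move=> x x' y y'; rewrite !inE -!far_cnbhd; apply: near_far_no_cross.
have : [set u; v] \subset [set w | cnbhd e u w].
  by apply/subsetP => z; rewrite !inE /cnbhd => /orP [] /eqP ->; rewrite ?eqxx ?euv ?orbT.
by move/subset_leq_card; rewrite cards2 (edge_neq e_simple euv).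
Qed.

End RaftStructure.

(* Orient an edge [vw] towards [w] when the region of [w] contains the point of
   [v]; the out-neighbours of [v] then share the point of [v]. *)
Lemma opo_of_point_regions (T : finType) (e : rel T) (P : Type)
    (pt : T -> P) (region : T -> P -> bool) :
  symmetric e -> irreflexive e ->
  (forall v w, e v w -> region w (pt v) || region v (pt w)) ->
  (forall v w q, region v q -> region w q -> v != w -> e v w) ->
  one_perfectly_orientable e.
Proof.
move=> e_sym e_irr edge_covered region_clique.
pose o v w := [&& e v w, region w (pt v) &
  (region v (pt w) ==> (enum_rank v < enum_rank w))].
exists o; split; first split.
- by move=> u v /andP [].
- move=> u v euv; rewrite /o euv e_sym euv /=.
  have : enum_rank u != enum_rank v.
    by rewrite (inj_eq enum_rank_inj); apply: contraTneq euv => ->; rewrite e_irr.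
  move: (edge_covered _ _ euv); rewrite -val_eqE /=.
  by case: (region v (pt u)); case: (region u (pt v)) => //= _; lia.
- by move=> v u w /and3P [_ ru _] /and3P [_ rw _]; apply: region_clique ru rw.
Qed.

Lemma cnbhd_P3 (p q : 'I_3) : cnbhd P3_rel p q = (p <= q.+1) && (q <= p.+1).
Proof. by rewrite /cnbhd /P3_rel -val_eqE /=; move: (ltn_ord p) (ltn_ord q); lia. Qed.

Section RaftK1Sufficiency.
Variable n : nat.

(* [R_n * K_1] is the intersection graph of the intervals [[raft_lo a, raft_hi a]]. *)
Definition raft_lo (a : option (bool * 'I_n.+1)) : nat :=
  match a with None => 0 | Some (false, _) => 0 | Some (true, j) => n.+1 - j end.
Definition raft_hi (a : option (bool * 'I_n.+1)) : nat :=
  match a with None => n.+1 | Some (false, i) => i | Some (true, _) => n.+1 end.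

Lemma cnbhd_raft_K1 a b :
  cnbhd (@raft_K1_rel n) a b = (raft_lo a <= raft_hi b) && (raft_lo b <= raft_hi a).
Proof.
rewrite /cnbhd.
case: a => [[[] i]|]; case: b => [[[] j]|] //=; rewrite /raft_rel /=.
all: rewrite /= ?xpair_eqE /= -?val_eqE /=.
all: try (case: (eqVneq i j) => [->|->]; rewrite ?eqxx ?orbT /=).
all: try move: (ltn_ord i); try move: (ltn_ord j); lia.
Qed.

(* Hence [P_3 ⊠ (R_n * K_1)] is the intersection graph of the boxes
   [[p, p + 1] × [raft_lo a, raft_hi a]]; each box gets a corner as its point,
   chosen so that of two meeting boxes one contains the corner of the other. *)
Definition box (v : 'I_3 * option (bool * 'I_n.+1)) (q : nat * nat) :=
  (v.1 <= q.1 <= v.1.+1) && (raft_lo v.2 <= q.2 <= raft_hi v.2).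

Definition corner (v : 'I_3 * option (bool * 'I_n.+1)) : nat * nat :=
  match nat_of_ord v.1 with
  | 0 => (1, raft_lo v.2)
  | 1 => if v.2 is Some (false, _) then (2, raft_hi v.2) else (1, raft_lo v.2)
  | _ => (2, raft_hi v.2)
  end.

Lemma P3_raft_K1_opo : one_perfectly_orientable (strong_prod P3_rel (@raft_K1_rel n)).
Proof.
apply: (@opo_of_point_regions _ _ _ corner box).
- move=> [p a] [q b]; rewrite /strong_prod /= !cnbhd_P3 !cnbhd_raft_K1 eq_sym.
  by congr (_ && _); apply/idP/idP; lia.
- by move=> x; rewrite /strong_prod eqxx.
- move=> [p a] [q b] /and3P [_]; rewrite cnbhd_P3 cnbhd_raft_K1 /=.
  case: p => [[|[|[|p]]] hp] //; case: q => [[|[|[|q]]] hq] //;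
  case: a => [[[] i]|]; case: b => [[[] j]|];
  rewrite /box /corner /=; try move: (ltn_ord i); try move: (ltn_ord j); lia.
- move=> [p a] [q b] [s t]; rewrite /box /= => /andP [h1 h2] /andP [h3 h4] ne.
  by rewrite /strong_prod ne cnbhd_P3 cnbhd_raft_K1 /=; lia.
Qed.

End RaftK1Sufficiency.

Lemma induced_P3_exists (T : finType) (e : rel T) :
  simple_graph e -> connected_graph e -> twin_free e -> 1 < #|T| ->
  exists f : 'I_3 -> T, induced_emb P3_rel e f.
Proof.
move=> e_simple e_conn e_twf card_T; have e_sym := proj1 e_simple.
have e_irr := proj2 e_simple.
have [/existsP [a /existsP [b /existsP [c /and4P [eab ebc ac nac]]]] | /existsPn noP3] :=
  boolP [exists a, exists b, exists c, [&& e a b, e b c, a != c & ~~ e a c]].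
  exists (fun i => nth a [:: a; b; c] i); apply: induced_emb_nth => //.
    by rewrite /= !inE !negb_or ac (edge_neq e_simple eab) (edge_neq e_simple ebc).
  move=> [[|[|[|i]]] hi] [[|[|[|j]]] hj] //=;
  by rewrite ?e_irr ?(e_sym b a) ?(e_sym c) ?eab ?ebc ?(negbTE nac).
have e_trans a b c : e a b -> e b c -> a != c -> e a c.
  move=> eab ebc ac; move/existsPn/(_ b)/existsPn/(_ c): (noP3 a).
  by rewrite eab ebc ac /= negbK.
have e_complete x y : x != y -> e x y.
  case/connectP: (e_conn x y) => p + ->.
  elim: p x => [|a p IH] x /=; first by rewrite eqxx.
  case/andP => exa pth xy; have [<-//|ay] := eqVneq a (last a p).
  exact: e_trans exa (IH a pth ay) xy.
have [u _] : exists u : T, u \in T by apply/card_gt0P; apply: ltn_trans card_T.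
have [t tu] := exists_neq u card_T.
exfalso; apply: (e_twf u t); split; first by rewrite eq_sym.
move=> z; rewrite /cnbhd; case: (eqVneq z u) => [->|zu] /=.
  by rewrite e_complete ?orbT // eq_sym.
case: (eqVneq z t) => [->|zt] /=; first by rewrite e_complete // eq_sym.
by rewrite !e_complete // eq_sym.
Qed.

Definition P4_in_raft n : 'I_4 -> bool * 'I_n.+1 := fun i =>
  nth (false, ord0) [:: (false, ord0); (false, ord_max); (true, ord_max); (true, ord0)] i.

Lemma induced_P4_raft n : 1 <= n -> induced_emb P4_rel (@raft_rel n) (@P4_in_raft n).
Proof.
move=> n_gt0; apply: induced_emb_nth => //.
  by rewrite /= !inE !xpair_eqE /= -!val_eqE /=; lia.
move=> [[|[|[|[|i]]]] hi] [[|[|[|[|j]]]] hj] //=; compute_rhs;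
  rewrite /raft_rel /= ?xpair_eqE /= -?val_eqE /=; lia.
Qed.

Lemma induced_raft_raft_K1 n : induced_emb (@raft_rel n) (@raft_K1_rel n) Some.
Proof. by split => // a b [->]. Qed.

Definition P3_in_raft_K1 : 'I_3 -> option (bool * 'I_1) := fun i =>
  nth None [:: Some (false, ord0); None; Some (true, ord0)] i.

Lemma P3_iso_raft_K1 : graph_iso P3_rel (@raft_K1_rel 0).
Proof.
exists P3_in_raft_K1; split; last by move=> [[|[|[|i]]] hi] [[|[|[|j]]] hj].
apply: inj_card_bij; last by rewrite card_option card_prod card_bool !card_ord.
move=> [[|[|[|i]]] hi] [[|[|[|j]]] hj] //= E; try (by case: E); exact: val_inj.
Qed.

Lemma raft_like_P3_or_induced_P4 (T : finType) (e : rel T) : raft_like e ->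
  graph_iso P3_rel e \/ exists f : 'I_4 -> T, induced_emb P4_rel e f.
Proof.
case => [[n [n_gt0 [f [f_bij f_rel]]]] | [[|n] [f [f_bij f_rel]]]].
- right; exists (f \o @P4_in_raft n); apply: induced_emb_comp (induced_P4_raft n_gt0) _.
  by split; [exact: bij_inj | exact: f_rel].
- left; have [g [[g' gK g'K] g_rel]] := P3_iso_raft_K1.
  exists (f \o g); split; first exact: bij_comp f_bij (Bijective gK g'K).
  by move=> i j /=; rewrite f_rel g_rel.
- right; exists (f \o Some \o @P4_in_raft n.+1).
  apply: induced_emb_comp (induced_emb_comp (induced_P4_raft (n:=n.+1) isT)
    (induced_raft_raft_K1 _)) _.
  by split; [exact: bij_inj | exact: f_rel].
Qed.

Lemma raft_like_induced_raft_K1 (T : finType) (e : rel T) : raft_like e ->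
  exists n (g : T -> option (bool * 'I_n.+1)), induced_emb e (@raft_K1_rel n) g.
Proof.
case => [[n [_ iso]] | [n iso]]; have [g g_emb] := iso_induced_emb iso; exists n.
- by exists (Some \o g); apply: induced_emb_comp g_emb (induced_raft_raft_K1 n).
- by exists g.
Qed.

Lemma opo_sprodC (T1 T2 : finType) (e1 : rel T1) (e2 : rel T2) :
  one_perfectly_orientable (strong_prod e1 e2) ->
  one_perfectly_orientable (strong_prod e2 e1).
Proof. exact: opo_induced_emb (induced_emb_sprodC e2 e1). Qed.

Lemma raft_like_of_sprod_opo (T1 T2 : finType) (e1 : rel T1) (e2 : rel T2) :
  simple_graph e1 -> connected_graph e1 -> twin_free e1 -> 1 < #|T1| ->
  simple_graph e2 -> connected_graph e2 -> twin_free e2 -> 1 < #|T2| ->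
  one_perfectly_orientable (strong_prod e1 e2) -> raft_like e2.
Proof.
move=> sg1 cn1 tw1 c1 sg2 cn2 tw2 c2 opo12.
have [f1 P3_e1] := induced_P3_exists sg1 cn1 tw1 c1.
apply: (raft_like_of_P3_sprod_opo sg2 cn2 tw2 c2); apply: (opo_induced_emb _ opo12).
exact: induced_emb_sprod P3_e1 (induced_emb_id e2).
Qed.

Lemma P3_sprod_raft_like_opo (T1 T2 : finType) (e1 : rel T1) (e2 : rel T2) :
  graph_iso P3_rel e1 -> raft_like e2 -> one_perfectly_orientable (strong_prod e1 e2).
Proof.
move=> iso1 raft2; have [g1 emb1] := iso_induced_emb iso1.
have [n [g2 emb2]] := raft_like_induced_raft_K1 raft2.
exact: opo_induced_emb (induced_emb_sprod emb1 emb2) (P3_raft_K1_opo n).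
Qed.

Theorem lemma21 (T1 T2 : finType) (e1 : rel T1) (e2 : rel T2) :
  simple_graph e1 -> simple_graph e2 ->
  connected_graph e1 -> connected_graph e2 ->
  1 < #|T1| -> 1 < #|T2| ->
  twin_free e1 -> twin_free e2 ->
  (one_perfectly_orientable (strong_prod e1 e2) <->
   (graph_iso P3_rel e1 /\ raft_like e2) \/
   (graph_iso P3_rel e2 /\ raft_like e1)).
Proof.
move=> sg1 sg2 cn1 cn2 c1 c2 tw1 tw2; split => [opo12|].
- have raft1 := raft_like_of_sprod_opo sg2 cn2 tw2 c2 sg1 cn1 tw1 c1 (opo_sprodC opo12).
  have raft2 := raft_like_of_sprod_opo sg1 cn1 tw1 c1 sg2 cn2 tw2 c2 opo12.
  case: (raft_like_P3_or_induced_P4 raft1) => [iso1|[g1 P4_e1]]; first by left.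
  case: (raft_like_P3_or_induced_P4 raft2) => [iso2|[g2 P4_e2]]; first by right.
  exfalso; apply: P4_P4_not_opo; apply: (opo_induced_emb _ opo12).
  exact: induced_emb_sprod P4_e1 P4_e2.
- case => [[iso1 raft2]|[iso2 raft1]]; first exact: P3_sprod_raft_like_opo.
  exact/opo_sprodC/P3_sprod_raft_like_opo.
Qed.
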